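(* Let $K$ be a field of characteristic $0$ and let $f\in K[[x_1,x_2]]$ be D-finite over $K(x_1,x_2)$, with non-zero annihilators $L_1\in K[x_1,x_2]\langle D_{x_1}\rangle$ and $L_2\in K[x_1,x_2]\langle D_{x_2}\rangle$ of orders at most $r_f$ and degrees at most $d_f$. Let $L=\sum_{i+j\le r_L}l_{i,j}(x_1,x_2)D_{x_1}^iD_{x_2}^j\in K[x_1,x_2]\langle D_{x_1},D_{x_2}\rangle$ be an operator of (total) order $r_L$ whose coefficients have total degree at most $d_L$, and let $g=L(f)$. Then there exist non-zero operators $A_1\in K[x_1,x_2]\langle D_{x_1}\rangle$ and $A_2\in K[x_1,x_2]\langle D_{x_2}\rangle$ with $A_1(g)=A_2(g)=0$, each of order $r_g\le r_f^2$ and degree $d_g\le (d_L+2d_f(r_f^2+r_L))\,r_f^2$.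
   Context: A series is D-finite over $K(x_1,x_2)$ if the $K(x_1,x_2)$-space spanned by all its partial derivatives is finite-dimensional. For an operator $\sum_{j=0}^r\ell_jD_{x_i}^j$ with polynomial coefficients and $\ell_r\ne0$, the order is $r$ and the degree is the maximal total degree of the coefficients $\ell_j$. *)

From HB Require Import structures.
From mathcomp Require Import all_boot all_order all_algebra.
From mathcomp Require Import multinomials.mpoly.
Set Implicit Arguments. Unset Strict Implicit. Unset Printing Implicit Defensive.
Import Order.TTheory GRing.Theory.
Local Open Scope ring_scope.

(* Formal power series in K[[x1,x2]] : coefficient of x1^i x2^j is f i j. *)
Definition series2 (K : fieldType) := nat -> nat -> K.

Definition D1 (K : fieldType) (f : series2 K) : series2 K :=
  fun i j => (i.+1)%:R * f i.+1 j.
Definition D2 (K : fieldType) (f : series2 K) : series2 K :=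
  fun i j => (j.+1)%:R * f i j.+1.

Definition pmul (K : fieldType) (p : {mpoly K[2]}) (f : series2 K) : series2 K :=
  fun i j => \sum_(m <- msupp p)
     (if (m ord0 <= i)%N && (m ord_max <= j)%N
      then p@_m * f (i - m ord0)%N (j - m ord_max)%N else 0).

(* An operator sum_{k} A`_k D_{x1}^k (resp. D_{x2}^k) with polynomial
   coefficients is represented by its coefficient sequence A. *)
Definition apply1 (K : fieldType) (A : seq {mpoly K[2]}) (f : series2 K) : series2 K :=
  fun i j => \sum_(k < size A) pmul A`_k (iter k (@D1 K) f) i j.
Definition apply2 (K : fieldType) (A : seq {mpoly K[2]}) (f : series2 K) : series2 K :=
  fun i j => \sum_(k < size A) pmul A`_k (iter k (@D2 K) f) i j.

Definition apply12 (K : fieldType) (r : nat) (l : nat -> nat -> {mpoly K[2]})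
  (f : series2 K) : series2 K :=
  fun i j => \sum_(a < r.+1) \sum_(b < (r - a).+1)
                pmul (l a b) (iter a (@D1 K) (iter b (@D2 K) f)) i j.

Definition nonzero_op (K : fieldType) (A : seq {mpoly K[2]}) :=
  exists k, A`_k != 0.
Definition order_le (K : fieldType) (A : seq {mpoly K[2]}) (r : nat) :=
  forall k, (r < k)%N -> A`_k = 0.
Definition degree_le (K : fieldType) (A : seq {mpoly K[2]}) (d : nat) :=
  forall k, (msize A`_k <= d.+1)%N.

From HB Require Import structures.
From mathcomp Require Import all_boot all_order all_algebra.
From mathcomp Require Import multinomials.ssrcomplements multinomials.mpoly.
From mathcomp Require Import boolp functions.
From mathcomp Require Import zify ring.
Import GRing.Theory.
Set Implicit Arguments. Unset Strict Implicit. Unset Printing Implicit Defensive.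
Local Open Scope ring_scope.

(* Let c1, c2 be the leading coefficients of L1, L2 at their exact orders
   r1, r2.  Differentiating L1 f = 0 and L2 f = 0 shows that, for a + b <= A
   and b + r1 <= B + 1, the series c1^A c2^B D1^a D2^b f is a K[x1,x2]-linear
   combination of the r1 r2 derivatives D1^i D2^j f (i < r1, j < r2) whose
   coefficients have degree at most d (A + B).  With A = rL + r1 r2 and
   B = rL + r1 - 1, this applies to Q D1^k g, Q = c1^A c2^B, for all
   k <= r1 r2.  These r1 r2 + 1 coordinate vectors of length r1 r2 admit a
   nonzero polynomial relation whose entries are minors (Cramer's rule), so of
   bounded degree; it gives A1 with Q A1(g) = 0, hence A1(g) = 0 because
   K[[x1,x2]] is a domain.  A2 follows by exchanging x1 and x2. *)

Section PolynomialAction.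
Variable K : fieldType.
Local Notation S := (series2 K).
Local Notation P := {mpoly K[2]}.
Implicit Types (p q : P) (h : S) (m : 'X_{1..2}).

Lemma series_ext (f g : S) : (forall i j, f i j = g i j) -> f = g.
Proof. by move=> fg; apply/funext => i; apply/funext => j; apply: fg. Qed.

Lemma series_sumE (I : Type) (r : seq I) (Pr : pred I) (F : I -> S) i j :
  (\sum_(x <- r | Pr x) F x) i j = \sum_(x <- r | Pr x) F x i j.
Proof. by rewrite !fct_sumE. Qed.

Lemma series_addE (f g : S) i j : (f + g) i j = f i j + g i j.
Proof. by []. Qed.

Lemma series0E i j : (0 : S) i j = 0.
Proof. by []. Qed.

Definition sscale (c : K) h : S := fun i j => c * h i j.

Lemma sscaleD c h1 h2 : sscale c (h1 + h2) = sscale c h1 + sscale c h2.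
Proof. by apply: series_ext => i j; rewrite /sscale !series_addE mulrDr. Qed.

Definition mdvd m i j := (m ord0 <= i)%N && (m ord_max <= j)%N.

Definition pmul_term h m (c : K) i j :=
  if mdvd m i j then c * h (i - m ord0)%N (j - m ord_max)%N else 0.

Lemma pmulE p h i j : pmul p h i j = \sum_(m <- msupp p) pmul_term h m p@_m i j.
Proof. by []. Qed.

Lemma pmul_msizeE k p h i j : (msize p <= k)%N ->
  pmul p h i j = \sum_(m : 'X_{1..2 < k}) pmul_term h m p@_m i j.
Proof.
move=> le_pk; rewrite pmulE (big_mksub 'X_{1..2 < k}) //=; first last.
- by move=> m /msize_mdeg_lt /leq_trans; apply.
- exact: msupp_uniq.
by rewrite big_rmcond //= => m /memN_msupp_eq0 ->; rewrite /pmul_term mul0r if_same.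
Qed.

Lemma pmulDl p q h : pmul (p + q) h = pmul p h + pmul q h.
Proof.
apply: series_ext => i j; pose k := maxn (msize p) (msize q).
have le_pk : (msize p <= k)%N := leq_maxl _ _.
have le_qk : (msize q <= k)%N := leq_maxr _ _.
have le_pqk : (msize (p + q) <= k)%N by rewrite (leq_trans (msizeD_le _ _)).
rewrite series_addE (pmul_msizeE _ _ _ le_pqk) (pmul_msizeE _ _ _ le_pk).
rewrite (pmul_msizeE _ _ _ le_qk) -big_split /=.
by apply: eq_bigr => m _; rewrite /pmul_term mcoeffD; case: ifP; rewrite ?mulrDl ?addr0.
Qed.

Lemma pmul0l h : pmul 0 h = 0.
Proof. by apply: series_ext => i j; rewrite pmulE msupp0 big_nil. Qed.

Lemma pmulNl p h : pmul (- p) h = - pmul p h.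
Proof. by apply/eqP; rewrite -subr_eq0 opprK -pmulDl addNr pmul0l. Qed.

Lemma pmul_suml (I : Type) (r : seq I) (Pr : pred I) (F : I -> P) h :
  pmul (\sum_(x <- r | Pr x) F x) h = \sum_(x <- r | Pr x) pmul (F x) h.
Proof. by elim/big_rec2: _ => [|x a b _ <-]; rewrite ?pmul0l ?pmulDl. Qed.

Lemma pmulDr p h1 h2 : pmul p (h1 + h2) = pmul p h1 + pmul p h2.
Proof.
apply: series_ext => i j; rewrite series_addE !pmulE -big_split /=.
by apply: eq_bigr => m _; rewrite /pmul_term; case: ifP; rewrite ?series_addE ?mulrDr ?addr0.
Qed.

Lemma pmul0r p : pmul p 0 = 0.
Proof.
apply: series_ext => i j; rewrite pmulE big1 // => m _.
by rewrite /pmul_term series0E mulr0 if_same.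
Qed.

Lemma pmulNr p h : pmul p (- h) = - pmul p h.
Proof. by apply/eqP; rewrite -subr_eq0 opprK -pmulDr addNr pmul0r. Qed.

Lemma pmul_sumr (I : Type) (r : seq I) (Pr : pred I) (F : I -> S) p :
  pmul p (\sum_(x <- r | Pr x) F x) = \sum_(x <- r | Pr x) pmul p (F x).
Proof. by elim/big_rec2: _ => [|x a b _ <-]; rewrite ?pmul0r ?pmulDr. Qed.

Lemma pmulZl c p h : pmul (c *: p) h = sscale c (pmul p h).
Proof.
apply: series_ext => i j; rewrite /sscale (pmul_msizeE _ _ _ (msizeZ_le p c)).
rewrite (pmul_msizeE _ _ _ (leqnn _)) mulr_sumr.
by apply: eq_bigr => m _; rewrite /pmul_term mcoeffZ; case: ifP; rewrite ?mulr0 ?mulrA.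
Qed.

Lemma pmul_sscaler c p h : pmul p (sscale c h) = sscale c (pmul p h).
Proof.
apply: series_ext => i j; rewrite /sscale !pmulE mulr_sumr.
by apply: eq_bigr => m _; rewrite /pmul_term; case: ifP => _; rewrite ?mulr0 // mulrCA.
Qed.

Lemma pmulX m h i j :
  pmul 'X_[m] h i j = if mdvd m i j then h (i - m ord0)%N (j - m ord_max)%N else 0.
Proof. by rewrite pmulE msuppX big_seq1 /pmul_term mcoeffX eqxx mul1r. Qed.

Lemma pmul1 h : pmul 1 h = h.
Proof. by apply: series_ext => i j; rewrite -mpolyX0 pmulX /mdvd !mnm0E !subn0. Qed.

Lemma mdvdD m m' i j :
  mdvd (m + m')%MM i j = mdvd m' i j && mdvd m (i - m' ord0) (j - m' ord_max).
Proof.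
rewrite /mdvd !mnmDE -andbA.
by apply/andP/and4P => [[? ?]|[? ? ? ?]]; split; lia.
Qed.

Lemma pmulMX p m h : pmul (p * 'X_[m]) h = pmul p (pmul 'X_[m] h).
Proof.
apply: series_ext => i j; rewrite pmulE (perm_big _ (msuppMX p m)) big_map pmulE.
apply: eq_bigr => m' _; rewrite /pmul_term mcoeffMX pmulX mdvdD !mnmDE.
case: (mdvd m' i j); rewrite ?mulr0 //=.
by case: ifP; rewrite ?mulr0 // -!subnDA !(addnC (m' _)).
Qed.

Lemma pmulM p q h : pmul (p * q) h = pmul p (pmul q h).
Proof.
rewrite [q in LHS]mpolyE [q in RHS]mpolyE mulr_sumr !pmul_suml pmul_sumr.
by apply: eq_bigr => m _; rewrite -scalerAr !pmulZl pmul_sscaler pmulMX.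
Qed.

Lemma pmulCA p q h : pmul p (pmul q h) = pmul q (pmul p h).
Proof. by rewrite -!pmulM mulrC. Qed.

End PolynomialAction.

Section Derivatives.
Variable K : fieldType.
Local Notation S := (series2 K).
Local Notation P := {mpoly K[2]}.
Implicit Types (p : P) (h : S) (m : 'X_{1..2}).

Lemma D1D h1 h2 : D1 (h1 + h2) = D1 h1 + D1 h2.
Proof. by apply: series_ext => i j; rewrite /D1 !series_addE mulrDr. Qed.

Lemma D2D h1 h2 : D2 (h1 + h2) = D2 h1 + D2 h2.
Proof. by apply: series_ext => i j; rewrite /D2 !series_addE mulrDr. Qed.

Lemma D10 : D1 (0 : S) = 0.
Proof. by apply: series_ext => i j; rewrite /D1 !series0E mulr0. Qed.

Lemma D20 : D2 (0 : S) = 0.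
Proof. by apply: series_ext => i j; rewrite /D2 !series0E mulr0. Qed.

Lemma D1_sum (I : Type) (r : seq I) (Pr : pred I) (F : I -> S) :
  D1 (\sum_(x <- r | Pr x) F x) = \sum_(x <- r | Pr x) D1 (F x).
Proof. exact: (big_morph _ D1D D10). Qed.

Lemma D2_sum (I : Type) (r : seq I) (Pr : pred I) (F : I -> S) :
  D2 (\sum_(x <- r | Pr x) F x) = \sum_(x <- r | Pr x) D2 (F x).
Proof. exact: (big_morph _ D2D D20). Qed.

Lemma D1_sscale c h : D1 (sscale c h) = sscale c (D1 h).
Proof. by apply: series_ext => i j; rewrite /D1 /sscale mulrCA. Qed.

Lemma D2_sscale c h : D2 (sscale c h) = sscale c (D2 h).
Proof. by apply: series_ext => i j; rewrite /D2 /sscale mulrCA. Qed.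

Lemma D1D2 h : D1 (D2 h) = D2 (D1 h).
Proof. by apply: series_ext => i j; rewrite /D1 /D2 mulrCA. Qed.

Lemma iterD1D2 a b h :
  iter a (@D1 K) (iter b (@D2 K) h) = iter b (@D2 K) (iter a (@D1 K) h).
Proof.
have D2_iterD1 k h' : D2 (iter k (@D1 K) h') = iter k (@D1 K) (D2 h').
  by elim: k => //= k IH; rewrite -D1D2 IH.
by elim: b => //= b <-; rewrite D2_iterD1.
Qed.

Lemma D1_pmulX m h :
  D1 (pmul 'X_[m] h) = pmul ('X_[m]^`M(ord0)) h + pmul 'X_[m] (D1 h).
Proof.
apply: series_ext => i j.
rewrite mderivX pmulZl series_addE /sscale /D1 !pmulX /mdvd !mnmBE !mnm1E /=.
case: (m ord0) => [|a]; rewrite ?subn0.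
  by rewrite mul0r add0r; case: ifP; rewrite ?mulr0.
rewrite !subSS subn0 ltnS.
case: (leqP (m ord_max) j) => hb; rewrite ?andbT ?andbF ?mulr0 ?addr0 //.
case: (ltngtP a i) => hai.
- rewrite subnSK // -mulrDl -natrD; congr (_%:R * _); lia.
- by rewrite !mulr0 addr0.
- by rewrite hai addr0.
Qed.

Lemma D2_pmulX m h :
  D2 (pmul 'X_[m] h) = pmul ('X_[m]^`M(ord_max)) h + pmul 'X_[m] (D2 h).
Proof.
apply: series_ext => i j.
rewrite mderivX pmulZl series_addE /sscale /D2 !pmulX /mdvd !mnmBE !mnm1E /=.
case: (m ord_max) => [|a]; rewrite ?subn0.
  by rewrite mul0r add0r; case: ifP; rewrite ?mulr0.
rewrite !subSS subn0 ltnS.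
case: (leqP (m ord0) i) => hb; rewrite ?andbF ?mulr0 ?addr0 //=.
case: (ltngtP a j) => haj.
- rewrite subnSK // -mulrDl -natrD; congr (_%:R * _); lia.
- by rewrite !mulr0 addr0.
- by rewrite haj addr0.
Qed.

Lemma D1_pmul p h : D1 (pmul p h) = pmul (p^`M(ord0)) h + pmul p (D1 h).
Proof.
rewrite [p in LHS]mpolyE [p in pmul p (D1 h)]mpolyE [p in p^`M(_)]mpolyE.
rewrite raddf_sum !pmul_suml D1_sum -big_split /=.
by apply: eq_bigr => m _; rewrite mderivZ !pmulZl D1_sscale D1_pmulX sscaleD.
Qed.

Lemma D2_pmul p h : D2 (pmul p h) = pmul (p^`M(ord_max)) h + pmul p (D2 h).
Proof.
rewrite [p in LHS]mpolyE [p in pmul p (D2 h)]mpolyE [p in p^`M(_)]mpolyE.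
rewrite raddf_sum !pmul_suml D2_sum -big_split /=.
by apply: eq_bigr => m _; rewrite mderivZ !pmulZl D2_sscale D2_pmulX sscaleD.
Qed.

End Derivatives.

Section DegreeBound.
Variables (R : idomainType) (n : nat).
Implicit Types (p q : {mpoly R[n]}).

Definition deg_le p d := (msize p <= d.+1)%N.

Lemma deg_le0 d : deg_le 0 d.
Proof. by rewrite /deg_le msize0. Qed.

Lemma deg_le1 d : deg_le 1 d.
Proof. by rewrite /deg_le msizeC oner_neq0. Qed.

Lemma deg_leW p d e : (d <= e)%N -> deg_le p d -> deg_le p e.
Proof. by rewrite /deg_le => le_de /leq_trans; apply; rewrite ltnS. Qed.

Lemma deg_leD p q d : deg_le p d -> deg_le q d -> deg_le (p + q) d.
Proof. by move=> dp dq; apply: leq_trans (msizeD_le _ _) _; rewrite geq_max; apply/andP. Qed.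

Lemma deg_leN p d : deg_le (- p) d = deg_le p d.
Proof. by rewrite /deg_le msizeN. Qed.

Lemma deg_leZ c p d : deg_le p d -> deg_le (c *: p) d.
Proof. exact/leq_trans/msizeZ_le. Qed.

Lemma deg_leMn p k d : deg_le p d -> deg_le (p *+ k) d.
Proof. by rewrite -scaler_nat; apply: deg_leZ. Qed.

Lemma deg_leM p q d e : deg_le p d -> deg_le q e -> deg_le (p * q) (d + e).
Proof.
have [->|nz_p] := eqVneq p 0; first by rewrite mul0r => _ _; apply: deg_le0.
have [->|nz_q] := eqVneq q 0; first by rewrite mulr0 => _ _; apply: deg_le0.
by rewrite /deg_le msizeM // => dp dq; lia.
Qed.

Lemma deg_leX p d k : deg_le p d -> deg_le (p ^+ k) (d * k).
Proof.
move=> dp; elim: k => [|k IH]; first by rewrite expr0 deg_le1.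
by rewrite exprS mulnS; apply: deg_leM.
Qed.

Lemma deg_le_sum (I : Type) (r : seq I) (Pr : pred I) (F : I -> {mpoly R[n]}) d :
  (forall x, Pr x -> deg_le (F x) d) -> deg_le (\sum_(x <- r | Pr x) F x) d.
Proof.
move=> dF; apply: (big_ind (deg_le^~ d)) => //; first exact: deg_le0.
by move=> x y dx dy; apply: (deg_leD dx dy).
Qed.

Lemma deg_le_prod m (G : 'I_m -> {mpoly R[n]}) d :
  (forall i, deg_le (G i) d) -> deg_le (\prod_(i < m) G i) (m * d).
Proof.
elim: m G => [|m IH] G dG; first by rewrite big_ord0 deg_le1.
by rewrite big_ord_recr mulSn addnC; apply: deg_leM => //; apply: IH.
Qed.

Lemma msize_mderiv i p : (msize p^`M(i) <= msize p)%N.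
Proof.
rewrite [X in (X <= _)%N]msizeE; apply/bigmax_leqP_seq => m.
rewrite mcoeff_msupp mcoeff_mderiv => nz_m _.
have : (m + U_(i))%MM \in msupp p.
  by rewrite mcoeff_msupp; apply: contraNneq nz_m => ->; rewrite mul0rn.
by move/msize_mdeg_lt; rewrite mdegD mdeg1 addn1 => /ltnW.
Qed.

Lemma deg_le_mderiv i p d : deg_le p d -> deg_le p^`M(i) d.
Proof. exact/leq_trans/msize_mderiv. Qed.

End DegreeBound.

Section SeriesDomain.
Variable K : fieldType.
Local Notation S := (series2 K).
Local Notation P := {mpoly K[2]}.

Lemma mnm2P (m m' : 'X_{1..2}) : m ord0 = m' ord0 -> m ord_max = m' ord_max -> m = m'.
Proof.
move=> e0 e1; apply/mnmP => -[[|[|k]] lt_k2] //.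
- by rewrite (_ : Ordinal lt_k2 = ord0) //; apply: val_inj.
- by rewrite (_ : Ordinal lt_k2 = ord_max) //; apply: val_inj.
Qed.

Lemma msupp_lexmin (p : P) : p != 0 -> exists2 m0, m0 \in msupp p &
  forall m, m \in msupp p ->
    (m0 ord0 < m ord0)%N || (m0 ord0 == m ord0) && (m0 ord_max <= m ord_max)%N.
Proof.
move=> nz_p.
have ex_u : exists u, has (fun m : 'X_{1..2} => m ord0 == u) (msupp p).
  by exists (mlead p ord0); apply/hasP; exists (mlead p); rewrite ?mlead_supp.
case: (ex_minnP ex_u) => u /hasP [m1 m1p /eqP m1u] u_min.
have ex_v : exists v, has (fun m : 'X_{1..2} => (m ord0 == u) && (m ord_max == v)) (msupp p).
  by exists (m1 ord_max); apply/hasP; exists m1; rewrite ?m1u ?eqxx.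
case: (ex_minnP ex_v) => v /hasP [m0 m0p /andP [/eqP m0u /eqP m0v]] v_min.
exists m0 => // m mp; rewrite m0u m0v.
have : (u <= m ord0)%N by apply: u_min; apply/hasP; exists m.
rewrite leq_eqVlt => /orP [/eqP um | ->] //.
rewrite -um ltnn eqxx /= v_min //.
by apply/hasP; exists m; rewrite // um !eqxx.
Qed.

Lemma pmul_eq0 (p : P) (h : S) : p != 0 -> pmul p h = 0 -> h = 0.
Proof.
move=> nz_p ph0; have [m0 m0p m0_min] := msupp_lexmin nz_p.
have nz_c : p@_m0 != 0 by rewrite -mcoeff_msupp.
apply: series_ext => i j; rewrite series0E.
elim/ltn_ind: i j => i IHi j; elim/ltn_ind: j => j IHj.
have := congr1 (fun f : S => f (i + m0 ord0)%N (j + m0 ord_max)%N) ph0.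
rewrite series0E pmulE (bigD1_seq m0) ?msupp_uniq //= big1_seq.
  rewrite addr0 /pmul_term /mdvd !leq_addl !addnK /= => /eqP.
  by rewrite mulf_eq0 (negbTE nz_c) => /eqP.
move=> m /andP [ne_m mp]; rewrite /pmul_term /mdvd; case: ifP => // /andP [le0 le1].
have /orP [lt0 | /andP [/eqP e0 le_max]] := m0_min m mp.
  by rewrite IHi ?mulr0 //; lia.
have lt_max : (m0 ord_max < m ord_max)%N.
  rewrite ltn_neqAle le_max andbT.
  by apply: contraNneq ne_m => e1; apply/eqP/mnm2P.
by rewrite -e0 addnK IHj ?mulr0 //; lia.
Qed.

End SeriesDomain.

Section Operators.
Variable K : fieldType.
Local Notation S := (series2 K).
Local Notation P := {mpoly K[2]}.
Implicit Types (L : seq P) (h : S).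

Lemma apply1E L h : apply1 L h = \sum_(k < size L) pmul L`_k (iter k (@D1 K) h).
Proof. by apply: series_ext => i j; rewrite series_sumE. Qed.

Lemma apply2E L h : apply2 L h = \sum_(k < size L) pmul L`_k (iter k (@D2 K) h).
Proof. by apply: series_ext => i j; rewrite series_sumE. Qed.

Lemma sum_ord_widen0 (V : zmodType) n m (t : nat -> V) : (n <= m)%N ->
  (forall k, (n <= k)%N -> t k = 0) -> \sum_(k < n) t k = \sum_(k < m) t k.
Proof.
move=> le_nm t0; rewrite (big_ord_widen _ _ le_nm) big_mkcond /=.
by apply: eq_bigr => k _; case: ltnP => // /t0 ->.
Qed.

Lemma apply1_order_le L r h : order_le L r ->
  apply1 L h = \sum_(k < r.+1) pmul L`_k (iter k (@D1 K) h).
Proof.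
move=> ord_L; pose t k := pmul L`_k (iter k (@D1 K) h).
rewrite apply1E (@sum_ord_widen0 _ _ _ t (leq_maxl (size L) r.+1)); last first.
  by move=> k le_Lk; rewrite /t nth_default ?pmul0l.
rewrite [RHS](@sum_ord_widen0 _ _ _ t (leq_maxr (size L) r.+1)) //.
by move=> k /ord_L Lk0; rewrite /t Lk0 pmul0l.
Qed.

Lemma exact_order L r : nonzero_op L -> order_le L r ->
  exists2 r', (r' <= r)%N & L`_r' != 0 /\ order_le L r'.
Proof.
move=> [k0 nz_k0] ord_L.
have ex_k : exists k, L`_k != 0 by exists k0.
have le_r k : L`_k != 0 -> (k <= r)%N.
  by rewrite leqNgt; apply: contraNN => /ord_L ->.
case: (ex_maxnP ex_k le_r) => r' nz_r' r'_max; exists r'; first exact: le_r.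
split=> // k; apply: contraTeq; rewrite -leqNgt; exact: r'_max.
Qed.

Lemma apply1_order0 L h : L`_0 != 0 -> order_le L 0 -> apply1 L h = 0 -> h = 0.
Proof.
move=> nz_L0 ord_L; rewrite (apply1_order_le _ ord_L) big_ord1.
exact: pmul_eq0.
Qed.

End Operators.

Section Swap.
Variable K : fieldType.
Local Notation S := (series2 K).
Local Notation P := {mpoly K[2]}.
Implicit Types (p : P) (h : S) (m : 'X_{1..2}) (L : seq P).

Definition swap_series h : S := fun i j => h j i.

Definition swap_mnm m : 'X_{1..2} :=
  [multinom (if i == ord0 then m ord_max else m ord0) | i < 2].

Definition swap_mpoly p : P := \sum_(m <- msupp p) p@_m *: 'X_[swap_mnm m].

Lemma swap_mnm0 m : swap_mnm m ord0 = m ord_max. Proof. by rewrite mnmE. Qed.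
Lemma swap_mnm1 m : swap_mnm m ord_max = m ord0. Proof. by rewrite mnmE. Qed.

Lemma swap_mnmK : involutive swap_mnm.
Proof. by move=> m; apply: mnm2P; rewrite ?swap_mnm0 ?swap_mnm1 ?swap_mnm0. Qed.

Lemma mdeg_swap_mnm m : mdeg (swap_mnm m) = mdeg m.
Proof.
have mdeg2 m' : mdeg m' = (m' ord0 + m' ord_max)%N.
  by rewrite mdegE !big_ord_recr big_ord0 /=; congr (m' _ + m' _); apply: val_inj.
by rewrite !mdeg2 swap_mnm0 swap_mnm1 addnC.
Qed.

Lemma mcoeff_swap_mpoly p m : (swap_mpoly p)@_m = p@_(swap_mnm m).
Proof.
rewrite raddf_sum /=.
under eq_bigr => m' _ do rewrite mcoeffZ mcoeffX.
have swap_eq m' : (swap_mnm m' == m) = (m' == swap_mnm m).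
  by apply/eqP/eqP => [<-|->]; rewrite swap_mnmK.
case: (boolP (swap_mnm m \in msupp p)) => sm_p.
  rewrite (bigD1_seq (swap_mnm m)) ?msupp_uniq //= swap_mnmK eqxx mulr1 big1 ?addr0 //.
  by move=> m' /negbTE ne; rewrite swap_eq ne mulr0.
rewrite big1_seq ?(memN_msupp_eq0 sm_p) // => m' /andP [_ m'p].
by rewrite swap_eq; case: eqP => [e|]; [rewrite -e m'p in sm_p | rewrite mulr0].
Qed.

Lemma swap_mpolyK : involutive swap_mpoly.
Proof. by move=> p; apply/mpolyP => m; rewrite !mcoeff_swap_mpoly swap_mnmK. Qed.

Lemma swap_mpoly0 : swap_mpoly 0 = 0.
Proof. by rewrite /swap_mpoly msupp0 big_nil. Qed.

Lemma swap_mpoly_eq0 p : (swap_mpoly p == 0) = (p == 0).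
Proof.
apply/eqP/eqP => [sp0|->]; last exact: swap_mpoly0.
by rewrite -[p]swap_mpolyK sp0 swap_mpoly0.
Qed.

Lemma msize_swap_mpoly p : msize (swap_mpoly p) = msize p.
Proof.
suff le_msize q : (msize (swap_mpoly q) <= msize q)%N.
  by apply/eqP; rewrite eqn_leq le_msize -{1}[p]swap_mpolyK le_msize.
rewrite [X in (X <= _)%N]msizeE; apply/bigmax_leqP_seq => m.
rewrite mcoeff_msupp mcoeff_swap_mpoly -mcoeff_msupp => /msize_mdeg_lt.
by rewrite mdeg_swap_mnm.
Qed.

Lemma pmul_swap p h : pmul (swap_mpoly p) (swap_series h) = swap_series (pmul p h).
Proof.
have msupp_swap : perm_eq (msupp (swap_mpoly p)) [seq swap_mnm m | m <- msupp p].
  have -> : swap_mpoly p = \sum_(m <- [seq swap_mnm m | m <- msupp p])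
                             p@_(swap_mnm m) *: 'X_[m].
    by rewrite big_map; apply: eq_bigr => m _; rewrite swap_mnmK.
  apply: msupp_sumX; first by rewrite map_inj_uniq ?msupp_uniq //; apply: inv_inj swap_mnmK.
  by move=> m /mapP [m' m'p ->]; rewrite swap_mnmK -mcoeff_msupp.
apply: series_ext => i j; rewrite /swap_series pmulE (perm_big _ msupp_swap) big_map.
apply: eq_bigr => m _.
by rewrite /pmul_term /mdvd mcoeff_swap_mpoly swap_mnmK swap_mnm0 swap_mnm1 andbC.
Qed.

Lemma pmul_swapX p k h :
  pmul (swap_mpoly p ^+ k) (swap_series h) = swap_series (pmul (p ^+ k) h).
Proof.
elim: k h => [|k IH] h; first by rewrite !expr0 !pmul1.
by rewrite !exprS !pmulM IH pmul_swap.
Qed.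

Lemma swap_seriesK : involutive swap_series. Proof. by []. Qed.

Lemma swap_series_sum (I : Type) (r : seq I) (Pr : pred I) (G : I -> S) :
  swap_series (\sum_(x <- r | Pr x) G x) = \sum_(x <- r | Pr x) swap_series (G x).
Proof. by apply: series_ext => i j; rewrite /swap_series !series_sumE. Qed.

Lemma swap_series_iterD1 k h :
  swap_series (iter k (@D1 K) h) = iter k (@D2 K) (swap_series h).
Proof. by elim: k => //= k IH; rewrite -IH. Qed.

Lemma swap_series_iterD2 k h :
  swap_series (iter k (@D2 K) h) = iter k (@D1 K) (swap_series h).
Proof. by elim: k => //= k IH; rewrite -IH. Qed.

Lemma nth_swap_mpoly L k : (map swap_mpoly L)`_k = swap_mpoly L`_k.
Proof.
case: (ltnP k (size L)) => lt_kL; first by rewrite (nth_map 0).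
by rewrite !nth_default ?size_map // swap_mpoly0.
Qed.

Lemma nonzero_op_swap L : nonzero_op L -> nonzero_op (map swap_mpoly L).
Proof. by move=> [k nz_k]; exists k; rewrite nth_swap_mpoly swap_mpoly_eq0. Qed.

Lemma order_le_swap L r : order_le L r -> order_le (map swap_mpoly L) r.
Proof. by move=> ord_L k lt_rk; rewrite nth_swap_mpoly ord_L ?swap_mpoly0. Qed.

Lemma degree_le_swap L d : degree_le L d -> degree_le (map swap_mpoly L) d.
Proof. by move=> deg_L k; rewrite nth_swap_mpoly msize_swap_mpoly. Qed.

Lemma apply2_swap L h : apply2 (map swap_mpoly L) (swap_series h) = swap_series (apply1 L h).
Proof.
rewrite apply2E apply1E swap_series_sum size_map.
by apply: eq_bigr => k _; rewrite nth_swap_mpoly -swap_series_iterD1 pmul_swap.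
Qed.

Lemma apply1_swap L h : apply1 (map swap_mpoly L) (swap_series h) = swap_series (apply2 L h).
Proof.
rewrite apply2E apply1E swap_series_sum size_map.
by apply: eq_bigr => k _; rewrite nth_swap_mpoly -swap_series_iterD2 pmul_swap.
Qed.

Lemma apply2_order0 L h : L`_0 != 0 -> order_le L 0 -> apply2 L h = 0 -> h = 0.
Proof.
move=> nz_L0 ord_L annL; suff /(congr1 swap_series) : swap_series h = 0 by [].
apply: (apply1_order0 (L := map swap_mpoly L)); last by rewrite apply1_swap annL.
  by rewrite nth_swap_mpoly swap_mpoly_eq0.
exact: order_le_swap.
Qed.

End Swap.

Lemma mderiv_expr_mul (R : comNzRingType) n (i : 'I_n) (c : {mpoly R[n]}) k :
  (c ^+ k)^`M(i) * c = c^`M(i) * c ^+ k *+ k.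
Proof.
elim: k => [|k IH]; first by rewrite expr0 mderivC mul0r mulr0n.
rewrite exprSr mderivM mulrDl IH mulrnAl -mulrA -exprSr mulrSr.
by congr (_ + _); rewrite exprSr; ring.
Qed.

(* A triple (p, a, b) stands for the term p * D1^a D2^b F. *)
Notation dterm K := ({mpoly K[2]} * nat * nat)%type.

Section Spans.
Variable K : fieldType.
Local Notation S := (series2 K).
Local Notation P := {mpoly K[2]}.
Implicit Types (p q : P) (h : S).

Definition dpart (F : S) a b : S := iter a (@D1 K) (iter b (@D2 K) F).

Definition dcomb (F : S) (s : seq (dterm K)) : S :=
  \sum_(x <- s) pmul x.1.1 (dpart F x.1.2 x.2).

Definition spanned (F : S) (adm : pred (dterm K)) h :=
  exists2 s, h = dcomb F s & all adm s.

Definition reduced (r1 r2 e : nat) (x : dterm K) :=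
  [&& (x.1.2 < r1)%N, (x.2 < r2)%N & deg_le x.1.1 e].

Lemma reducedN r1 r2 e p a b : reduced r1 r2 e (- p, a, b) = reduced r1 r2 e (p, a, b).
Proof. by rewrite /reduced deg_leN. Qed.

Lemma reducedW r1 r2 e r1' r2' e' x : (r1 <= r1')%N -> (r2 <= r2')%N -> (e <= e')%N ->
  reduced r1 r2 e x -> reduced r1' r2' e' x.
Proof.
move=> le_r1 le_r2 le_e /and3P [lt1 lt2 deg_x].
by rewrite /reduced (leq_trans lt1) ?(leq_trans lt2) ?(deg_leW le_e).
Qed.

Lemma reducedM r1 r2 e e' q p a b : deg_le q e' ->
  reduced r1 r2 e (p, a, b) -> reduced r1 r2 (e' + e) (q * p, a, b).
Proof. by move=> deg_q /and3P [lt1 lt2 deg_p]; rewrite /reduced lt1 lt2 deg_leM. Qed.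

Variable F : S.
Implicit Types (adm : pred (dterm K)).

Lemma dpartD1 a b : D1 (dpart F a b) = dpart F a.+1 b. Proof. by []. Qed.

Lemma dpartD2 a b : D2 (dpart F a b) = dpart F a b.+1.
Proof. by rewrite /dpart !iterD1D2. Qed.

Lemma spanned0 adm : spanned F adm 0.
Proof. by exists [::]; rewrite /dcomb ?big_nil. Qed.

Lemma spannedD adm h1 h2 : spanned F adm h1 -> spanned F adm h2 -> spanned F adm (h1 + h2).
Proof.
move=> [s1 -> adm1] [s2 -> adm2]; exists (s1 ++ s2); last by rewrite all_cat adm1.
by rewrite /dcomb big_cat.
Qed.

Lemma spanned_sum adm (I : Type) (r : seq I) (Pr : pred I) (H : I -> S) :
  (forall x, Pr x -> spanned F adm (H x)) -> spanned F adm (\sum_(x <- r | Pr x) H x).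
Proof.
move=> spH; elim/big_rec: _ => [|x h Px]; first exact: spanned0.
by apply: spannedD; apply: spH.
Qed.

Lemma spanned_term adm p a b : adm (p, a, b) -> spanned F adm (pmul p (dpart F a b)).
Proof. by move=> adm_x; exists [:: (p, a, b)]; rewrite /dcomb ?big_seq1 //= adm_x. Qed.

Lemma spanned_additive adm adm' (Phi : S -> S) h :
  (forall h1 h2, Phi (h1 + h2) = Phi h1 + Phi h2) -> Phi 0 = 0 ->
  (forall p a b, adm (p, a, b) -> spanned F adm' (Phi (pmul p (dpart F a b)))) ->
  spanned F adm h -> spanned F adm' (Phi h).
Proof.
move=> PhiD Phi0 Phi_adm [s -> adm_s]; rewrite /dcomb (big_morph Phi PhiD Phi0).
by rewrite big_seq; apply: spanned_sum => -[[p a] b] /(allP adm_s); apply: Phi_adm.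
Qed.

Lemma spanned_pmul adm adm' q h :
  (forall p a b, adm (p, a, b) -> adm' (q * p, a, b)) ->
  spanned F adm h -> spanned F adm' (pmul q h).
Proof.
move=> adm_q; apply: spanned_additive; [exact: pmulDr | exact: pmul0r |].
by move=> p a b /adm_q adm'_x; rewrite -pmulM; apply: spanned_term.
Qed.

Lemma spannedN adm h : (forall p a b, adm (p, a, b) -> adm (- p, a, b)) ->
  spanned F adm h -> spanned F adm (- h).
Proof.
move=> admN; apply: (spanned_additive (Phi := -%R)); [exact: opprD | exact: oppr0 |].
by move=> p a b /admN adm_x; rewrite -pmulNl; apply: spanned_term.
Qed.

Lemma spanned_reducedN r1 r2 e h :
  spanned F (reduced r1 r2 e) h -> spanned F (reduced r1 r2 e) (- h).
Proof. by apply: spannedN => p a b; rewrite reducedN. Qed.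

Lemma spanned_D1 adm adm' h :
  (forall p a b, adm (p, a, b) -> adm' (p^`M(ord0), a, b) /\ adm' (p, a.+1, b)) ->
  spanned F adm h -> spanned F adm' (D1 h).
Proof.
move=> adm_D; apply: spanned_additive; [exact: D1D | exact: D10 |].
move=> p a b /adm_D [adm1 adm2]; rewrite D1_pmul dpartD1.
by apply: spannedD; apply: spanned_term.
Qed.

Lemma spanned_D2 adm adm' h :
  (forall p a b, adm (p, a, b) -> adm' (p^`M(ord_max), a, b) /\ adm' (p, a, b.+1)) ->
  spanned F adm h -> spanned F adm' (D2 h).
Proof.
move=> adm_D; apply: spanned_additive; [exact: D2D | exact: D20 |].
move=> p a b /adm_D [adm1 adm2]; rewrite D2_pmul dpartD2.
by apply: spannedD; apply: spanned_term.
Qed.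

Lemma dcomb_reducedE r1 r2 e s : all (reduced r1 r2 e) s ->
  dcomb F s = \sum_(i < r1) \sum_(j < r2)
                pmul (\sum_(x <- s | (x.1.2 == i) && (x.2 == j)) x.1.1) (dpart F i j).
Proof.
have ord_neq n k (lt_kn : (k < n)%N) (i : 'I_n) : i != Ordinal lt_kn -> (k == i) = false.
  by move=> ne_i; apply: contraNF ne_i => /eqP eq_k; apply/eqP/val_inj.
move=> red_s; rewrite /dcomb.
transitivity (\sum_(x <- s) \sum_(i < r1) \sum_(j < r2)
  (if (x.1.2 == i) && (x.2 == j) then pmul x.1.1 (dpart F i j) else 0)).
  rewrite !big_seq; apply: eq_bigr => -[[p a] b] /(allP red_s) /and3P [lt_a lt_b _] /=.
  rewrite (bigD1 (Ordinal lt_a)) //= (bigD1 (Ordinal lt_b)) //= !eqxx /=.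
  rewrite big1 => [|j /ord_neq -> //].
  by rewrite big1 ?addr0 // => i /ord_neq ->; rewrite big1.
rewrite exchange_big; apply: eq_bigr => i _; rewrite exchange_big; apply: eq_bigr => j _.
by rewrite pmul_suml [RHS]big_mkcond.
Qed.

Lemma spanned_reduced_coords r1 r2 e h : spanned F (reduced r1 r2 e) h ->
  exists2 C : 'M[P]_(r1, r2),
    h = \sum_(i < r1) \sum_(j < r2) pmul (C i j) (dpart F i j) &
    forall i j, deg_le (C i j) e.
Proof.
move=> [s -> red_s].
exists (\matrix_(i, j) \sum_(x <- s | (x.1.2 == i) && (x.2 == j)) x.1.1).
  rewrite (dcomb_reducedE red_s).
  by apply: eq_bigr => i _; apply: eq_bigr => j _; rewrite mxE.
move=> i j; rewrite mxE big_seq_cond; apply: deg_le_sum => x /andP [xs _].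
by case/and3P: (allP red_s x xs).
Qed.

Lemma apply12E rL (l : nat -> nat -> P) : apply12 rL l F =
  \sum_(a < rL.+1) \sum_(b < (rL - a).+1) pmul (l a b) (dpart F a b).
Proof.
apply: series_ext => i j; rewrite series_sumE.
by apply: eq_bigr => a _; rewrite series_sumE.
Qed.

End Spans.

Lemma dpart_swap (K : fieldType) (F : series2 K) a b :
  swap_series (dpart F a b) = dpart (swap_series F) b a.
Proof. by rewrite /dpart swap_series_iterD1 swap_series_iterD2 iterD1D2. Qed.

Lemma spanned_swap (K : fieldType) (F : series2 K) (adm adm' : pred (dterm K)) h :
  (forall p a b, adm (p, a, b) -> adm' (swap_mpoly p, b, a)) ->
  spanned (swap_series F) adm h -> spanned F adm' (swap_series h).
Proof.
move=> adm_swap [s -> adm_s]; rewrite /dcomb swap_series_sum big_seq.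
apply: spanned_sum => -[[p a] b] /(allP adm_s) /adm_swap adm'_x /=.
by rewrite -pmul_swap dpart_swap swap_seriesK; apply: spanned_term.
Qed.

Lemma pmul_exprS_deriv (K : fieldType) (D : series2 K -> series2 K) (i : 'I_2) :
  (forall p h, D (pmul p h) = pmul p^`M(i) h + pmul p (D h)) ->
  forall (c : {mpoly K[2]}) k h, pmul (c ^+ k.+1) (D h) =
    pmul c (D (pmul (c ^+ k) h)) - pmul (c^`M(i) *+ k) (pmul (c ^+ k) h).
Proof.
move=> leibniz c k h; rewrite leibniz pmulDr -!pmulM -exprS.
by rewrite mulrC mderiv_expr_mul -mulrnAl pmulM addrAC subrr add0r.
Qed.

Section Reduction.
Variable K : fieldType.
Local Notation S := (series2 K).
Local Notation P := {mpoly K[2]}.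

Variables (F : S) (L : seq P) (r d : nat).
Hypotheses (annL : apply1 L F = 0) (ord_L : order_le L r) (deg_L : degree_le L d).
Hypothesis r_gt0 : (0 < r)%N.
Local Notation c := L`_r.

Lemma lead_dpart : pmul c (dpart F r 0) = - \sum_(k < r) pmul L`_k (dpart F k 0).
Proof.
move: annL; rewrite (apply1_order_le _ ord_L) big_ord_recr /=.
by move/eqP; rewrite addrC addr_eq0 => /eqP.
Qed.

Lemma spanned_lead1_dpart0 a : spanned F (reduced r 1 (d * a)) (pmul (c ^+ a) (dpart F a 0)).
Proof.
elim: a => [|a IH].
  by rewrite expr0; apply: spanned_term; rewrite /reduced r_gt0 deg_le1.
rewrite -dpartD1 (pmul_exprS_deriv (@D1_pmul K)) mulnS; apply: spannedD.
  apply: (spanned_additive (adm := reduced r.+1 1 (d * a))); [exact: pmulDr | exact: pmul0r | |].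
    move=> p i b /and3P /= [le_ir]; rewrite ltnS leqn0 => /eqP -> deg_p; rewrite pmulCA.
    move: le_ir; rewrite ltnS leq_eqVlt => /orP [/eqP -> | lt_ir].
      rewrite lead_dpart pmulNr pmul_sumr; apply: spanned_reducedN.
      apply: spanned_sum => k _; rewrite -pmulM mulrC; apply: spanned_term.
      by apply: reducedM; [apply: deg_L | rewrite /reduced ltn_ord deg_p].
    rewrite -pmulM mulrC; apply: spanned_term.
    by apply: reducedM; [apply: deg_L | rewrite /reduced lt_ir deg_p].
  apply: spanned_D1 IH => p i b /and3P /= [lt_ir lt_b deg_p].
  by split; apply/and3P; split=> //; [exact: ltnW | exact: deg_le_mderiv].
apply: spanned_reducedN; apply: spanned_pmul IH => p i b.
by apply: reducedM; apply/deg_leMn/deg_le_mderiv/deg_L.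
Qed.

Lemma spanned_lead1_dpart a b :
  spanned F (reduced r b.+1 (d * (a + b))) (pmul (c ^+ (a + b)) (dpart F a b)).
Proof.
elim: b => [|b IH]; first by rewrite addn0; apply: spanned_lead1_dpart0.
rewrite addnS -dpartD2 (pmul_exprS_deriv (@D2_pmul K)) mulnS; apply: spannedD.
  apply: (spanned_pmul (adm := reduced r b.+2 (d * (a + b)))).
    by move=> p i t; apply: reducedM; apply: deg_L.
  apply: spanned_D2 IH => p i t /and3P /= [lt_ir lt_tb deg_p].
  by split; apply/and3P; split=> //; [exact: ltnW | exact: deg_le_mderiv].
apply: spanned_reducedN; apply: spanned_pmul IH => p i t red_x.
by apply: reducedM (reducedW _ _ _ red_x) => //; apply/deg_leMn/deg_le_mderiv/deg_L.
Qed.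

End Reduction.

Section TwoOperators.
Variable K : fieldType.
Local Notation S := (series2 K).
Local Notation P := {mpoly K[2]}.

Variables (F : S) (L1 L2 : seq P) (r1 r2 d : nat).
Hypotheses (annL1 : apply1 L1 F = 0) (ord_L1 : order_le L1 r1) (deg_L1 : degree_le L1 d).
Hypotheses (annL2 : apply2 L2 F = 0) (ord_L2 : order_le L2 r2) (deg_L2 : degree_le L2 d).
Hypotheses (r1_gt0 : (0 < r1)%N) (r2_gt0 : (0 < r2)%N).
Local Notation c1 := L1`_r1.
Local Notation c2 := L2`_r2.

Lemma spanned_lead2_dpart a b :
  spanned F (reduced a.+1 r2 (d * (a + b))) (pmul (c2 ^+ (a + b)) (dpart F a b)).
Proof.
have annL2' : apply1 (map (@swap_mpoly K) L2) (swap_series F) = 0.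
  by rewrite apply1_swap annL2.
have := spanned_lead1_dpart annL2' (order_le_swap ord_L2) (degree_le_swap deg_L2) r2_gt0 b a.
rewrite nth_swap_mpoly -dpart_swap pmul_swapX addnC => /spanned_swap; apply.
by move=> p i j /and3P /= [lt_i lt_j deg_p]; rewrite /reduced /= lt_i lt_j /deg_le msize_swap_mpoly.
Qed.

Variables (A B : nat).
Local Notation Q := (c1 ^+ A * c2 ^+ B).

Lemma spanned_Q_dpart a b : (a + b <= A)%N -> (b + r1 <= B.+1)%N ->
  spanned F (reduced r1 r2 (d * (A + B))) (pmul Q (dpart F a b)).
Proof.
move=> le_abA le_bB.
have -> : Q = (c1 ^+ (A - (a + b)) * c2 ^+ B) * c1 ^+ (a + b).
  by rewrite mulrAC -exprD subnK.
rewrite pmulM; apply: spanned_additive (spanned_lead1_dpart annL1 ord_L1 deg_L1 r1_gt0 a b);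
  [exact: pmulDr | exact: pmul0r |].
move=> p i t /and3P /= [lt_i lt_t deg_p].
have le_itB : (i + t <= B)%N by lia.
have -> : pmul (c1 ^+ (A - (a + b)) * c2 ^+ B) (pmul p (dpart F i t)) =
  pmul (c1 ^+ (A - (a + b)) * c2 ^+ (B - (i + t)) * p) (pmul (c2 ^+ (i + t)) (dpart F i t)).
  by rewrite -!pmulM -[in LHS](subnK le_itB) exprD; congr pmul; ring.
apply: spanned_pmul (spanned_lead2_dpart i t) => q i' j red_q.
have deg_c1 := deg_leX (A - (a + b)) (deg_L1 r1).
have deg_c2 := deg_leX (B - (i + t)) (deg_L2 r2).
apply: reducedW (reducedM (deg_leM (deg_leM deg_c1 deg_c2) deg_p) red_q) => //.
by rewrite -!mulnDr leq_mul2l; apply/orP; right; lia.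
Qed.

Variables (rL dL : nat) (l : nat -> nat -> P).
Hypothesis deg_l : forall a b, (a + b <= rL)%N -> deg_le (l a b) dL.

Definition dterm_bounded n m e (x : dterm K) :=
  [&& (x.1.2 + x.2 <= n)%N, (x.2 <= m)%N & deg_le x.1.1 e].

Lemma spanned_D1_apply12 k :
  spanned F (dterm_bounded (rL + k) rL dL) (iter k (@D1 K) (apply12 rL l F)).
Proof.
elim: k => [|k IH] /=.
  rewrite apply12E; apply: spanned_sum => a _; apply: spanned_sum => b _.
  have le_abL : (a + b <= rL)%N by have := ltn_ord b; have := ltn_ord a; lia.
  by apply: spanned_term; rewrite /dterm_bounded addn0 le_abL deg_l //=; lia.
apply: spanned_D1 IH => p a b /and3P /= [le_ab le_b deg_p].
by rewrite /dterm_bounded /= le_b deg_le_mderiv //= addnS !ltnS le_ab (leqW le_ab) deg_p.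
Qed.

Lemma spanned_Q_D1_apply12 k : (rL + k <= A)%N -> (rL + r1 <= B.+1)%N ->
  spanned F (reduced r1 r2 (dL + d * (A + B))) (pmul Q (iter k (@D1 K) (apply12 rL l F))).
Proof.
move=> le_kA le_r1B; apply: spanned_additive (spanned_D1_apply12 k);
  [exact: pmulDr | exact: pmul0r |].
move=> p a b /and3P /= [le_ab le_b deg_p]; rewrite pmulCA.
apply: spanned_pmul (spanned_Q_dpart _ _) => //; [| lia | lia].
by move=> q i j; apply: reducedM.
Qed.

End TwoOperators.

Section BoundedKernel.
Variables (R : idomainType) (n : nat).
Local Notation P := {mpoly R[n]}.

Lemma deg_le_det m (A : 'M[P]_m) e : (forall i j, deg_le (A i j) e) -> deg_le (\det A) (m * e).
Proof.
move=> deg_A; apply: deg_le_sum => s _; rewrite -[(m * e)%N]add0n.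
apply: deg_leM; last exact: deg_le_prod.
by rewrite -signr_odd; case: (odd _); rewrite ?deg_leN deg_le1.
Qed.

Lemma deg_le_adj m (A : 'M[P]_m.+1) e :
  (forall i j, deg_le (A i j) e) -> forall i j, deg_le (\adj A i j) (m * e).
Proof.
move=> deg_A i j; rewrite mxE /cofactor -[(m * e)%N]add0n.
apply: deg_leM; first by rewrite -signr_odd; case: (odd _); rewrite ?deg_leN deg_le1.
by apply: deg_le_det => a b; rewrite !mxE.
Qed.

Lemma rowV_neq0 k (y : 'rV[P]_k) : y != 0 -> exists j, y 0 j != 0.
Proof.
move=> nz_y; apply/existsP; apply: contraNT nz_y; rewrite negb_exists => /forallP y0.
by apply/eqP/rowP => j; rewrite mxE; apply/eqP; rewrite -[_ == 0]negbK y0.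
Qed.

Lemma row_lift_eq0 l (z y : 'rV[P]_l) j0 : z *m y^T = 0 -> y 0 j0 != 0 ->
  (forall j, z 0 (lift j0 j) = 0) -> z = 0.
Proof.
move=> zy0 nz_y z_lift.
have z_j0 : z 0 j0 = 0.
  move/matrixP/(_ 0 0): zy0; rewrite !mxE (bigD1 j0) //= big1 ?addr0.
    by rewrite mxE => /eqP; rewrite mulf_eq0 (negbTE nz_y) orbF => /eqP.
  by move=> j; case: (unliftP j0 j) => [j' ->|->]; rewrite ?eqxx // z_lift mul0r.
by apply/rowP => j; rewrite mxE; case: (unliftP j0 j) => [j' ->|->]; rewrite ?z_lift.
Qed.

Lemma mulmx_col'_eq0 k l (M : 'M[P]_(k, l)) (y : 'rV[P]_l) (v : 'rV[P]_k) j0 :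
  M *m y^T = 0 -> y 0 j0 != 0 -> v *m col' j0 M = 0 -> v *m M = 0.
Proof.
move=> My0 nz_y vM'0; apply: row_lift_eq0 nz_y _; first by rewrite -mulmxA My0 mulmx0.
move=> j; transitivity ((v *m col' j0 M) 0 j); last by rewrite vM'0 mxE.
by rewrite !mxE; apply: eq_bigr => i _; rewrite mxE.
Qed.

Lemma bounded_kernel_vector m (M : 'M[P]_(1 + m, m)) e :
  (forall i j, deg_le (M i j) e) ->
  exists v : 'rV[P]_(1 + m), [/\ v != 0, v *m M = 0 & forall j, deg_le (v 0 j) (m * e)].
Proof.
elim: m M => [|m IH] M deg_M.
  exists (const_mx 1); split; last by move=> j; rewrite mxE deg_le1.
    by apply/eqP => /rowP /(_ 0); rewrite !mxE => /eqP; rewrite oner_eq0.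
  by apply/matrixP => i [].
rewrite -[M]vsubmxK; set r := usubmx M; set M1 := dsubmx M.
have deg_M1 i j : deg_le (M1 i j) e by rewrite mxE.
(* If the square block M1 is singular, delete a column of M1 on which some
   y with M1 y^T = 0 is nonzero and recurse; otherwise use its adjugate. *)
have [det0|nz_det] := eqVneq (\det M1) 0.
  have /det0P [y nz_y yM1] : \det M1^T == 0 by rewrite det_tr det0.
  have [j0 nz_yj0] := rowV_neq0 nz_y.
  have deg_M1' i j : deg_le (col' j0 M1 i j) e by rewrite mxE.
  have [v [nz_v vM1' deg_v]] := IH _ deg_M1'.
  exists (row_mx 0 v); split.
  - by apply: contra nz_v; rewrite -row_mx0 => /eqP /eq_row_mx [_ ->].
  - rewrite mul_row_col mul0mx add0r; apply: mulmx_col'_eq0 nz_yj0 vM1'.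
    by rewrite -[M1]trmxK -trmx_mul yM1 trmx0.
  - move=> j; rewrite -[j]fintype.splitK; case: (fintype.split j) => j' /=.
      rewrite row_mxEl.
      by rewrite mxE deg_le0.
    by rewrite row_mxEr; apply: deg_leW (deg_v j'); rewrite leq_mul2r leqnSn orbT.
exists (row_mx (\det M1)%:M (- (r *m \adj M1))); split.
- apply/eqP => /rowP /(_ (lshift _ 0)); rewrite row_mxEl !mxE eqxx mulr1n.
  by move/eqP; rewrite (negbTE nz_det).
- by rewrite mul_row_col mul_scalar_mx mulNmx -mulmxA mul_adj_mx mul_mx_scalar subrr.
- move=> j; rewrite -[j]fintype.splitK; case: (fintype.split j) => j' /=.
    by rewrite row_mxEl !mxE (ord1 j') eqxx mulr1n; apply: deg_le_det.
  rewrite row_mxEr !mxE deg_leN; apply: deg_le_sum => i _; rewrite mulSn.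
  by apply: deg_leM; [rewrite mxE | apply: deg_le_adj].
Qed.

End BoundedKernel.

Section Annihilator.
Variable K : fieldType.
Local Notation S := (series2 K).
Local Notation P := {mpoly K[2]}.

Variables (F : S) (L1 L2 : seq P) (r1 r2 d : nat).
Hypotheses (annL1 : apply1 L1 F = 0) (ord_L1 : order_le L1 r1) (deg_L1 : degree_le L1 d).
Hypotheses (annL2 : apply2 L2 F = 0) (ord_L2 : order_le L2 r2) (deg_L2 : degree_le L2 d).
Hypotheses (r1_gt0 : (0 < r1)%N) (r2_gt0 : (0 < r2)%N).
Hypotheses (nz_c1 : L1`_r1 != 0) (nz_c2 : L2`_r2 != 0).
Variables (rL dL : nat) (l : nat -> nat -> P).
Hypothesis deg_l : forall a b, (a + b <= rL)%N -> deg_le (l a b) dL.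

Local Notation N := (r1 * r2)%N.
Local Notation A := (rL + N)%N.
Local Notation B := (rL + r1).-1.
Local Notation E := (dL + d * (A + B))%N.
Local Notation Q := (L1`_r1 ^+ A * L2`_r2 ^+ B).
Local Notation g := (apply12 rL l F).

Lemma annihilator1_exact_orders : exists A1 : seq P,
  [/\ nonzero_op A1, order_le A1 N, degree_le A1 (N * E) & apply1 A1 g = 0].
Proof.
have coords (k : 'I_(1 + N)) : exists C : 'M[P]_(r1, r2),
    pmul Q (iter k (@D1 K) g) = \sum_(i < r1) \sum_(j < r2) pmul (C i j) (dpart F i j)
    /\ forall i j, deg_le (C i j) E.
  have le_kA : (rL + k <= A)%N by have := ltn_ord k; lia.
  have le_r1B : (rL + r1 <= B.+1)%N by lia.
  have [C eqC degC] := spanned_reduced_coords (spanned_Q_D1_apply12 annL1 ord_L1 deg_L1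
    annL2 ord_L2 deg_L2 r1_gt0 r2_gt0 deg_l le_kA le_r1B).
  by exists C.
have [C HC] := choice coords.
pose M : 'M[P]_(1 + N, N) := \matrix_(k, c) mxvec (C k) 0 c.
have deg_M k c : deg_le (M k c) E.
  by rewrite mxE; case/mxvec_indexP: c => i j; rewrite mxvecE; apply: (proj2 (HC k)).
have [v [nz_v vM0 deg_v]] := bounded_kernel_vector deg_M.
pose A1 := mkseq (fun k => v 0 (inord k)) (1 + N).
have A1E (k : 'I_(1 + N)) : A1`_k = v 0 k by rewrite nth_mkseq ?inord_val.
exists A1; split.
- by have [j nz_j] := rowV_neq0 nz_v; exists j; rewrite A1E.
- by move=> k lt_Nk; rewrite nth_default // size_mkseq.
- move=> k; case: (ltnP k (1 + N)) => [lt_k | le_k]; last first.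
    by rewrite nth_default ?size_mkseq // msize0.
  by rewrite (A1E (Ordinal lt_k)); apply: deg_v.
apply: (pmul_eq0 (p := Q)); first by rewrite mulf_neq0 // expf_neq0.
rewrite apply1E size_mkseq pmul_sumr.
transitivity (\sum_(k < 1 + N) \sum_(i < r1) \sum_(j < r2) pmul (v 0 k * C k i j) (dpart F i j)).
  apply: eq_bigr => k _; rewrite A1E pmulCA (proj1 (HC k)) pmul_sumr.
  by apply: eq_bigr => i _; rewrite pmul_sumr; apply: eq_bigr => j _; rewrite pmulM.
rewrite exchange_big; apply: big1 => i _; rewrite exchange_big; apply: big1 => j _.
rewrite -pmul_suml (_ : \sum_k _ = (v *m M) 0 (mxvec_index i j)).
  by rewrite vM0 mxE pmul0l.
by rewrite mxE; apply: eq_bigr => k _; rewrite mxE mxvecE.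
Qed.

End Annihilator.

Lemma sum_triangle_swap (V : zmodType) n (G : nat -> nat -> V) :
  \sum_(a < n.+1) \sum_(b < (n - a).+1) G b a = \sum_(a < n.+1) \sum_(b < (n - a).+1) G a b.
Proof.
have triangleE (H : nat -> nat -> V) : \sum_(a < n.+1) \sum_(b < (n - a).+1) H a b =
    \sum_(a < n.+1) \sum_(b < n.+1) (if (a + b <= n)%N then H a b else 0).
  apply: eq_bigr => a _; have le_an : (a <= n)%N by rewrite -ltnS.
  have le_na : ((n - a).+1 <= n.+1)%N by rewrite ltnS leq_subr.
  rewrite (big_ord_widen n.+1 (H a) le_na) big_mkcond /=.
  by apply: eq_bigr => b _; rewrite ltnS leq_subRL.
rewrite (triangleE (fun a b => G b a)) triangleE exchange_big /=.
by apply: eq_bigr => a _; apply: eq_bigr => b _; rewrite addnC.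
Qed.

Section Apply12.
Variable K : fieldType.
Local Notation S := (series2 K).
Local Notation P := {mpoly K[2]}.

Lemma apply12_swap rL (l : nat -> nat -> P) (F : S) :
  apply12 rL (fun a b => swap_mpoly (l b a)) (swap_series F) = swap_series (apply12 rL l F).
Proof.
rewrite !apply12E swap_series_sum.
under [RHS]eq_bigr => a _ do rewrite swap_series_sum.
rewrite -(sum_triangle_swap rL (fun a b => swap_series (pmul (l a b) (dpart F a b)))).
by apply: eq_bigr => a _; apply: eq_bigr => b _; rewrite -pmul_swap dpart_swap.
Qed.

Lemma apply12_0 rL (l : nat -> nat -> P) : apply12 rL l 0 = 0.
Proof.
have dpart0 a b : dpart (0 : S) a b = 0.
  by rewrite /dpart; elim: a => [|a /= ->]; [elim: b => //= b ->; apply: D20 | apply: D10].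
rewrite apply12E big1 // => a _; rewrite big1 // => b _.
by rewrite dpart0 pmul0r.
Qed.

Lemma one_annihilates0 r e : [/\ nonzero_op [:: 1 : P], order_le [:: 1 : P] r,
  degree_le [:: 1 : P] e & apply1 [:: 1 : P] (0 : S) = 0].
Proof.
split.
- by exists 0%N; rewrite oner_neq0.
- by move=> [|k] //=; rewrite nth_nil.
- by move=> [|k]; rewrite /= ?nth_nil ?msize0 // msizeC oner_neq0.
- by rewrite apply1E big_ord1 pmul1.
Qed.

End Apply12.

Section MainBounds.
Variable K : fieldType.
Local Notation S := (series2 K).
Local Notation P := {mpoly K[2]}.

Variables (F : S) (L1 L2 : seq P) (rf d : nat).
Hypotheses (nz_L1 : nonzero_op L1) (ord_L1 : order_le L1 rf) (deg_L1 : degree_le L1 d).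
Hypothesis annL1 : apply1 L1 F = 0.
Hypotheses (nz_L2 : nonzero_op L2) (ord_L2 : order_le L2 rf) (deg_L2 : degree_le L2 d).
Hypothesis annL2 : apply2 L2 F = 0.
Variables (rL dL : nat) (l : nat -> nat -> P).
Hypothesis deg_l : forall a b, (a + b <= rL)%N -> deg_le (l a b) dL.

Lemma annihilator1 : exists A1 : seq P,
  [/\ nonzero_op A1, order_le A1 (rf ^ 2),
      degree_le A1 ((dL + 2 * d * (rf ^ 2 + rL)) * rf ^ 2) & apply1 A1 (apply12 rL l F) = 0].
Proof.
have [r1 le_r1 [nz_c1 ord_L1']] := exact_order nz_L1 ord_L1.
have [r2 le_r2 [nz_c2 ord_L2']] := exact_order nz_L2 ord_L2.
have [F0 | [r1_gt0 r2_gt0]] : F = 0 \/ (0 < r1)%N /\ (0 < r2)%N.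
  have [r1_0|r1_gt0] := posnP r1.
    by rewrite r1_0 in nz_c1 ord_L1'; left; apply: apply1_order0 annL1.
  have [r2_0|r2_gt0] := posnP r2; last by right.
  by rewrite r2_0 in nz_c2 ord_L2'; left; apply: apply2_order0 annL2.
  by rewrite F0 apply12_0; exists [:: 1]; apply: one_annihilates0.
have [A1 [nz_A1 ord_A1 deg_A1 annA1]] := annihilator1_exact_orders annL1 ord_L1' deg_L1
  annL2 ord_L2' deg_L2 r1_gt0 r2_gt0 nz_c1 nz_c2 deg_l.
have le_N : (r1 * r2 <= rf ^ 2)%N by rewrite expnS expn1 leq_mul.
have le_r1f : (r1 <= rf ^ 2)%N by rewrite (leq_trans le_r1) // expnS expn1 leq_pmulr; lia.
exists A1; split => //.
- by move=> k lt_k; apply: ord_A1; apply: leq_ltn_trans lt_k.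
- move=> k; apply: deg_leW (deg_A1 k); rewrite mulnC leq_mul // leq_add2l.
  by rewrite [(2 * d)%N]mulnC -mulnA leq_mul2l; apply/orP; right; lia.
Qed.

End MainBounds.

Lemma annihilator2 (K : fieldType) (F : series2 K) (L1 L2 : seq {mpoly K[2]}) rf d
  (nz_L1 : nonzero_op L1) (ord_L1 : order_le L1 rf) (deg_L1 : degree_le L1 d)
  (annL1 : apply1 L1 F = 0)
  (nz_L2 : nonzero_op L2) (ord_L2 : order_le L2 rf) (deg_L2 : degree_le L2 d)
  (annL2 : apply2 L2 F = 0)
  rL dL (l : nat -> nat -> {mpoly K[2]})
  (deg_l : forall a b, (a + b <= rL)%N -> deg_le (l a b) dL) :
  exists A2 : seq {mpoly K[2]},
  [/\ nonzero_op A2, order_le A2 (rf ^ 2),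
      degree_le A2 ((dL + 2 * d * (rf ^ 2 + rL)) * rf ^ 2) & apply2 A2 (apply12 rL l F) = 0].
Proof.
have annL1' : apply2 (map (@swap_mpoly K) L1) (swap_series F) = 0.
  by rewrite apply2_swap annL1.
have annL2' : apply1 (map (@swap_mpoly K) L2) (swap_series F) = 0.
  by rewrite apply1_swap annL2.
have deg_l' a b : (a + b <= rL)%N -> deg_le (swap_mpoly (l b a)) dL.
  by rewrite addnC /deg_le msize_swap_mpoly; apply: deg_l.
have [A [nz_A ord_A deg_A annA]] := annihilator1 (nonzero_op_swap nz_L2)
  (order_le_swap ord_L2) (degree_le_swap deg_L2) annL2' (nonzero_op_swap nz_L1)
  (order_le_swap ord_L1) (degree_le_swap deg_L1) annL1' deg_l'.
exists (map (@swap_mpoly K) A); split.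
- exact: nonzero_op_swap.
- exact: order_le_swap.
- exact: degree_le_swap.
by rewrite -[apply12 _ _ _]swap_seriesK -apply12_swap apply2_swap annA.
Qed.

Theorem lemma3p17 (K : fieldType) (charK0 : [pchar K] =i pred0)
  (f : series2 K) (rf df : nat) (L1 L2 : seq {mpoly K[2]})
  (hL1nz : nonzero_op L1) (hL1r : order_le L1 rf) (hL1d : degree_le L1 df)
  (hL1f : apply1 L1 f = (fun _ _ => 0))
  (hL2nz : nonzero_op L2) (hL2r : order_le L2 rf) (hL2d : degree_le L2 df)
  (hL2f : apply2 L2 f = (fun _ _ => 0))
  (rL dL : nat) (l : nat -> nat -> {mpoly K[2]})
  (hl : forall a b, (a + b <= rL)%N -> (msize (l a b) <= dL.+1)%N) :
  let g := apply12 rL l f in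
  exists A1 A2 : seq {mpoly K[2]},
    [/\ nonzero_op A1, order_le A1 (rf ^ 2), degree_le A1 ((dL + 2 * df * (rf ^ 2 + rL)) * rf ^ 2),
        apply1 A1 g = (fun _ _ => 0) &
     [/\ nonzero_op A2, order_le A2 (rf ^ 2), degree_le A2 ((dL + 2 * df * (rf ^ 2 + rL)) * rf ^ 2)
        & apply2 A2 g = (fun _ _ => 0)]].
Proof.
move=> g.
have [A1 [nz_A1 ord_A1 deg_A1 annA1]] :=
  annihilator1 hL1nz hL1r hL1d hL1f hL2nz hL2r hL2d hL2f hl.
have [A2 [nz_A2 ord_A2 deg_A2 annA2]] :=
  annihilator2 hL1nz hL1r hL1d hL1f hL2nz hL2r hL2d hL2f hl.
by exists A1, A2.
Qed.
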